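(* There exists a prefix-independent objective $W$ (over a set of colours $C$) with $\varepsilon$-memory $\le 2$ such that for every integer $m\ge1$ there is a $C$-graph $G_m$ satisfying $W$ such that every monotone $C$-graph satisfying $W$ into which $G_m$ has a morphism contains an antichain of cardinality $m$.
   Context: A $C$-graph: vertex set $V(G)$, edges $E(G)\subseteq V(G)\times C\times V(G)$ written $v\xrightarrow{c}v'$, every vertex having an outgoing edge. A morphism maps vertices so edges go to edges of the same colour. A graph satisfies an objective $W\subseteq C^\omega$ if every infinite path has colour sequence in $W$. $W$ is prefix-independent if $uw\in W\iff w\in W$ for all $u\in C^*$, $w\in C^\omega$. A partially ordered graph is monotone if $u\ge v\xrightarrow{c}v'\ge u'$ implies $u\xrightarrow{c}u'$. Games and $\varepsilon$-memory: let $\varepsilon\notin C$, $C^\varepsilon=C\sqcup\{\varepsilon\}$; $W^\varepsilon$ consists of the $w\in(C^\varepsilon)^\omega$ whose $\varepsilon$-free projection $w_C$ is infinite and in $W$, or finite with some continuation in $W$. A game is $(G,V_{\mathrm{Eve}},v_0,W^\varepsilon)$ with $G$ a $C^\varepsilon$-graph; a strategy is $(S,\pi,s_0)$ with $\pi:S\to G$ a morphism, $\pi(s_0)=v_0$, and for $v\notin V_{\mathrm{Eve}}$, $v\xrightarrow{c}v'$, $s\in\pi^{-1}(v)$ some $s'\in\pi^{-1}(v')$ with $s\xrightarrow{c}s'$; it is winning if all infinite paths from $s_0$ have colour sequences in $W^\varepsilon$. An $\varepsilon$-strategy has $V(S)\subseteq V(G)\times M$, $\pi(v,m)=v$, and $\varepsilon$-edges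 preserve the $M$-component; its memory is $|M|$. $W$ has $\varepsilon$-memory $\le 2$ if every such game that has a winning strategy has a winning $\varepsilon$-strategy with $|M|\le2$. *)

From mathcomp Require Import all_boot.
Unset Printing Implicit Defensive.

Record Graph (C : Type) := mkGraph {
  vtx : Type;
  edge : vtx -> C -> vtx -> Prop;
  edge_total : forall v, exists c v', edge v c v'
}.
Arguments vtx {C} g.
Arguments edge {C} g _ _ _.

Definition is_morphism {C} (G H : Graph C) (f : vtx G -> vtx H) : Prop :=
  forall v c v', edge G v c v' -> edge H (f v) c (f v').

Definition is_path {C} (G : Graph C) (v : nat -> vtx G) (c : nat -> C) : Prop :=
  forall i, edge G (v i) (c i) (v i.+1).

Definition satisfies {C} (W : (nat -> C) -> Prop) (G : Graph C) : Prop :=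
  forall v c, is_path G v c -> W c.

Definition prepend {C} (u : seq C) (w : nat -> C) : nat -> C :=
  fun n => if n < size u then nth (w 0) u n else w (n - size u).

Definition prefix_independent {C} (W : (nat -> C) -> Prop) : Prop :=
  forall (u : seq C) (w : nat -> C), W (prepend u w) <-> W w.

Definition partial_order {T : Type} (le : T -> T -> Prop) : Prop :=
  (forall x, le x x) /\ (forall x y, le x y -> le y x -> x = y) /\
  (forall x y z, le x y -> le y z -> le x z).

Definition monotone {C} (G : Graph C) (le : vtx G -> vtx G -> Prop) : Prop :=
  forall u v v' u' c, le v u -> edge G v c v' -> le u' v' -> edge G u c u'.

Definition has_antichain {T : Type} (le : T -> T -> Prop) (m : nat) : Prop :=
  exists f : 'I_m -> T, forall i j, i != j -> ~ le (f i) (f j).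

(* epsilon-extension: colours option C, None = epsilon *)
Fixpoint proj_fin {C} (w : nat -> option C) (k : nat) : seq C :=
  match k with
  | 0 => [::]
  | k'.+1 => proj_fin w k' ++ (match w k' with Some c => [:: c] | None => [::] end)
  end.

(* W^eps: either the projection is infinite (equal to a stream s) and in W,
   or finite (equal to u) and u has a continuation in W. *)
Definition Weps {C} (W : (nat -> C) -> Prop) (w : nat -> option C) : Prop :=
  (exists s : nat -> C, (forall n, exists k, proj_fin w k = mkseq s n) /\ W s)
  \/ (exists k, (forall k', k <= k' -> proj_fin w k' = proj_fin w k) /\
        exists w' : nat -> C, W (prepend (proj_fin w k) w')).

Definition is_strategy {C} (G : Graph (option C)) (VEve : vtx G -> Prop) (v0 : vtx G)
  (S : Graph (option C)) (pi : vtx S -> vtx G) (s0 : vtx S) : Prop :=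
  is_morphism S G pi /\ pi s0 = v0 /\
  (forall v c v', ~ VEve v -> edge G v c v' ->
     forall s, pi s = v -> exists s', pi s' = v' /\ edge S s c s').

Definition is_winning {C} (W : (nat -> C) -> Prop) (S : Graph (option C)) (s0 : vtx S) : Prop :=
  forall v c, is_path S v c -> v 0 = s0 -> Weps W c.

(* W has epsilon-memory <= 2: every game with a winning strategy has a winning
   epsilon-strategy with memory set M of size <= 2.  The vertex set of an
   epsilon-strategy is a subset of V(G) x M: encoded by an injection emb,
   with pi = fst o emb. *)
Definition eps_memory_le2 {C} (W : (nat -> C) -> Prop) : Prop :=
  forall (G : Graph (option C)) (VEve : vtx G -> Prop) (v0 : vtx G),
    (exists (S : Graph (option C)) (pi : vtx S -> vtx G) (s0 : vtx S),
        is_strategy G VEve v0 S pi s0 /\ is_winning W S s0) ->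
    exists (M : finType) (S : Graph (option C)) (emb : vtx S -> vtx G * M) (s0 : vtx S),
      #|M| <= 2 /\ injective emb /\
      (forall s s', edge S s None s' -> (emb s).2 = (emb s').2) /\
      is_strategy G VEve v0 S (fun s => (emb s).1) s0 /\ is_winning W S s0.

From Stdlib Require Import Classical ClassicalEpsilon ProofIrrelevance.
From mathcomp Require Import all_boot zify.
Set Implicit Arguments. Unset Strict Implicit. Unset Printing Implicit Defensive.

(* W asks for both colours infinitely often.

   On [clique m], with vertices 0..m and an edge i -> j of colour (i < j) for
   all i <> j, a path of eventually constant colour would be eventually
   strictly monotone in a bounded range, so [clique m] satisfies W.  If
   f : clique m -> H is a morphism into a monotone H and f i <= f j for some
   i <> j, monotonicity turns the edge i -> j into a loop at f j, a
   monochromatic cycle that H cannot have: the f i form an antichain.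

   For epsilon-memory 2, memory b means "waiting for colour b".  Every vertex
   visited by a winning strategy lies in the nested fixpoint
   mu Y. nu X. cpre b X Y (epsilon-edges stay in X, colour b returns to
   visited vertices, colour ~~b goes into Y), since otherwise the strategy
   has a play that avoids b but sees ~~b infinitely often.  Building the least
   fixpoint as a transfinite tower of sets gives a well-founded rank, which
   the memory strategy never increases and strictly decreases on colour ~~b;
   so it eventually sees b, flips its memory, and every play is won. *)

Definition incl {T : Type} (X Y : T -> Prop) := forall t, X t -> Y t.

Definition inf_often (P : nat -> Prop) := forall N, exists2 n, N <= n & P n.

Definition ev_always (P : nat -> Prop) := exists N, forall n, N <= n -> P n.

Lemma not_inf_often P : ~ inf_often P -> ev_always (fun n => ~ P n).
Proof.
move=> nP; apply: NNPP => nev; apply: nP => N.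
apply: NNPP => nN; apply: nev; exists N => n Nn Pn; apply: nN; by exists n.
Qed.

Section Tower.
Variables (V : Type) (Phi : (V -> Prop) -> V -> Prop).
Hypothesis Phi_mono : forall X Y, incl X Y -> incl (Phi X) (Phi Y).

Inductive tower : (V -> Prop) -> Prop :=
| tower_Phi Y : tower Y -> tower (Phi Y)
| tower_sup (F : (V -> Prop) -> Prop) :
    (forall Y, F Y -> tower Y) -> tower (fun v => exists2 Y, F Y & Y v).

Lemma tower_incl_Phi Y : tower Y -> incl Y (Phi Y).
Proof.
elim=> [Z _ IH | F _ IH]; first exact: Phi_mono.
move=> v [Z FZ Zv]; apply: (Phi_mono (X := Z)); last exact: IH.
by move=> u Zu; exists Z.
Qed.

Lemma tower_incl_prefix P Y : incl (Phi P) P -> tower Y -> incl Y P.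
Proof.
move=> PhiP; elim=> [Z _ IH | F _ IH]; first by move=> v /(Phi_mono IH) /PhiP.
by move=> v [Z FZ Zv]; exact: IH FZ _ Zv.
Qed.

(* The comparability argument of the Bourbaki-Witt theorem: [c] is extreme if
   every stage strictly below [c] is mapped into [c] by [Phi]. *)
Definition extreme c := forall x, tower x -> incl x c -> ~ incl c x -> incl (Phi x) c.

Lemma extreme_cmp c : tower c -> extreme c ->
  forall x, tower x -> incl x c \/ incl (Phi c) x.
Proof.
move=> tc ec x; elim=> [y ty [yc | cy] | F tF IH].
- case: (classic (incl c y)) => [cy | ncy]; first by right; exact: Phi_mono.
  by left; exact: ec.
- by right=> v /cy /(tower_incl_Phi ty).
- case: (classic (exists2 Y, F Y & incl (Phi c) Y)) => [[Y FY cY] | nF].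
    by right=> v /cY; exists Y.
  left=> v [Y FY Yv]; case: (IH Y FY) => [|cY]; first exact.
  by case: nF; exists Y.
Qed.

Lemma tower_extreme c : tower c -> extreme c.
Proof.
elim=> [y ty IH | F tF IH] x tx xc ncx.
  case: (extreme_cmp ty IH tx) => [xy | //]; exact: Phi_mono.
have [d Fd ndx] : exists2 d, F d & ~ incl (Phi d) x.
  apply: NNPP => nd; apply: ncx => v [d Fd dv]; apply: NNPP => nxv.
  apply: nd; exists d => // dx; apply/nxv/dx; exact: tower_incl_Phi (tF d Fd) _ dv.
case: (extreme_cmp (tF d Fd) (IH d Fd) tx) => [xd | //].
case: (classic (incl d x)) => [dx | ndx']; last first.
  by move=> v /(IH d Fd x tx xd ndx') dv; exists d.
have [u [d' Fd' d'u] nxu] : exists2 u, (exists2 Y, F Y & Y u) & ~ x u.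
  apply: NNPP => nu; apply: ncx => u cu; apply: NNPP => nxu; apply: nu; by exists u.
case: (extreme_cmp (tF d Fd) (IH d Fd) (tF d' Fd')) => [d'd | dd'].
  by case: nxu; exact/dx/d'd.
by move=> v /(Phi_mono xd) /dd' d'v; exists d'.
Qed.

Lemma tower_cmp Y Z : tower Y -> tower Z -> incl Z Y \/ incl (Phi Y) Z.
Proof. by move=> tY; exact: (extreme_cmp tY (tower_extreme tY)). Qed.

Definition lfp v := exists2 Y, tower Y & Y v.

(* [rank v] is the union of the stages not containing [v]; it plays the role of
   the ordinal at which [v] enters [lfp]. *)
Definition rank v u := exists2 Y, tower Y /\ ~ Y v & Y u.

Lemma tower_lfp : tower lfp.
Proof. exact: tower_sup. Qed.

Lemma tower_rank v : tower (rank v).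
Proof. by apply: tower_sup => Y []. Qed.

Lemma tower_incl_lfp Y : tower Y -> incl Y lfp.
Proof. by move=> tY v Yv; exists Y. Qed.

Lemma Phi_lfp_incl : incl (Phi lfp) lfp.
Proof. exact/tower_incl_lfp/tower_Phi/tower_lfp. Qed.

Lemma lfp_incl_Phi : incl lfp (Phi lfp).
Proof. exact: tower_incl_Phi tower_lfp. Qed.

Lemma rank_incl_lfp v : incl (rank v) lfp.
Proof. exact/tower_incl_lfp/tower_rank. Qed.

Lemma Phi_rank_incl_lfp v : incl (Phi (rank v)) lfp.
Proof. exact/tower_incl_lfp/tower_Phi/tower_rank. Qed.

Lemma rank_irr v : ~ rank v v.
Proof. by case=> Y [_ nYv] Yv. Qed.

Lemma lfp_Phi_rank v : lfp v -> Phi (rank v) v.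
Proof.
move=> lfp_v; apply: NNPP => nv; apply: (@rank_irr v).
apply: tower_incl_prefix tower_lfp _ lfp_v => u Hu.
by exists (Phi (rank v)) => //; split => //; exact/tower_Phi/tower_rank.
Qed.

Lemma rank_Phi_le v u : Phi (rank v) u -> incl (rank u) (rank v).
Proof.
move=> Hu; case: (tower_cmp (tower_rank v) (tower_rank u)) => // vu.
by case: (@rank_irr u); exact: vu.
Qed.

Lemma rank_le v u : rank v u -> incl (rank u) (rank v).
Proof. by move=> /(tower_incl_Phi (tower_rank v)) /rank_Phi_le. Qed.

Lemma no_rank_descent (f : nat -> V) : lfp (f 0) ->
  (forall n, incl (rank (f n.+1)) (rank (f n))) ->
  ~ inf_often (fun n => rank (f n) (f n.+1)).
Proof.
move=> lfp_f0 f_dec f_desc.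
have rank_le_from N k : incl (rank (f (N + k))) (rank (f N)).
  elim: k => [|k IH]; first by rewrite addn0.
  by move=> v; rewrite addnS => /f_dec /IH.
pose Y v := exists2 Z, tower Z /\ forall n, incl Z (rank (f n)) & Z v.
have tY : tower Y by apply: tower_sup => Z [].
case: (classic (forall n, incl (Phi Y) (rank (f n)))) => [PhiY | ].
  have [Z [_ Zf] Zf0] : Y (f 0).
    apply: tower_incl_prefix tower_lfp _ lfp_f0 => v Hv.
    by exists (Phi Y) => //; split => //; exact: tower_Phi.
  by case: (@rank_irr (f 0)); exact: Zf.
move=> /not_all_ex_not [N nN].
case: (tower_cmp tY (tower_rank (f N))) => [fNY | //].
have [n Nn fn] := f_desc N.
have : rank (f N) (f n.+1) by have := rank_le_from N (n - N); rewrite subnKC //; apply.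
move=> /fNY [Z [_ Zf] Zfn]; by case: (@rank_irr (f n.+1)); exact: Zf.
Qed.

End Tower.

Definition both_inf (s : nat -> bool) : Prop := forall x, inf_often (fun n => s n = x).

Lemma both_inf_prefix_independent : prefix_independent both_inf.
Proof.
move=> u w; split=> H x N.
  have [n Nn] := H x (N + size u).
  rewrite /prepend ifF; last by apply/negbTE; lia.
  by exists (n - size u) => //; lia.
have [n Nn wn] := H x N; exists (n + size u); first lia.
by rewrite /prepend ifF ?addnK //; apply/negbTE; lia.
Qed.

Lemma both_inf_odd : both_inf odd.
Proof.
move=> x N; case: (boolP (odd N == x)) => [/eqP | Nx]; first by exists N.
by exists N.+1 => //=; move: Nx; case: x; case: (odd N).
Qed.

Section ProjFin.
Variable w : nat -> option bool.
Notation pf := (proj_fin w).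

Lemma proj_fin_add k d : exists2 t, pf (k + d) = pf k ++ t &
  forall y, y \in t -> exists2 i, k <= i & w i = Some y.
Proof.
elim: d => [|d [t Ht Hm]]; first by exists [::]; rewrite ?addn0 ?cats0.
exists (t ++ if w (k + d) is Some c then [:: c] else [::]).
  by rewrite addnS /= Ht catA.
move=> y; rewrite mem_cat => /orP [/Hm // |].
case E: (w (k + d)) => [c|] //; rewrite inE => /eqP ->.
by exists (k + d); rewrite ?leq_addr.
Qed.

Lemma size_proj_fin_mono k k' : k <= k' -> size (pf k) <= size (pf k').
Proof.
move=> kk'; have [t Ht _] := proj_fin_add k (k' - k).
by rewrite -(subnKC kk') Ht size_cat leq_addr.
Qed.

Lemma size_proj_finS k : size (pf k.+1) = size (pf k) + (w k != None).
Proof. by rewrite /= size_cat; case: (w k). Qed.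

Lemma proj_finS_Some k y : w k = Some y -> pf k.+1 = rcons (pf k) y.
Proof. by move=> /= ->; rewrite cats1. Qed.

Lemma size_proj_fin_attained k n : n <= size (pf k) -> exists j, size (pf j) = n.
Proof.
elim: k n => [|k IH] n; first by rewrite leqn0 => /eqP ->; exists 0.
case: (boolP (n == size (pf k.+1))) => [/eqP -> _ | ]; first by exists k.+1.
by rewrite size_proj_finS => nk nk1; apply: IH; move: nk nk1; case: (w k != None); lia.
Qed.

Lemma Weps_inf_often : (forall x, inf_often (fun i => w i = Some x)) -> Weps both_inf w.
Proof.
move=> w_inf; left.
have unbounded n : exists k, n < size (pf k).
  elim: n => [|n [k Hk]].
    by have [i _ wi] := w_inf true 0; exists i.+1; rewrite size_proj_finS wi addn1.
  have [i ki wi] := w_inf true k; exists i.+1; rewrite size_proj_finS wi addn1 ltnS.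
  exact: leq_trans Hk (size_proj_fin_mono ki).
pose s n := nth false (pf (xchoose (unbounded n))) n.
have s_nth n k : n < size (pf k) -> s n = nth false (pf k) n.
  move=> Hk; have Hn := xchooseP (unbounded n); rewrite /s.
  set k' := xchoose _ in Hn *.
  case: (leqP k' k) => [k'k | kk'].
    have [t Ht _] := proj_fin_add k' (k - k'); rewrite subnKC // in Ht.
    by rewrite Ht nth_cat Hn.
  have [t Ht _] := proj_fin_add k (k' - k); rewrite subnKC ?(ltnW kk') // in Ht.
  by rewrite Ht nth_cat Hk.
exists s; split.
  move=> n; have [k Hk] := unbounded n.
  have [j Hj] := size_proj_fin_attained (ltnW Hk); exists j.
  apply: (@eq_from_nth _ false); first by rewrite size_mkseq.
  by move=> i; rewrite Hj => Hi; rewrite nth_mkseq // (s_nth i j) ?Hj.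
move=> x N; have [k Hk] := unbounded N; have [i ki wi] := w_inf x k.
exists (size (pf i)); first exact: leq_trans (ltnW Hk) (size_proj_fin_mono ki).
rewrite (s_nth _ i.+1); last by rewrite size_proj_finS wi addn1.
by rewrite (proj_finS_Some wi) nth_rcons ltnn eqxx.
Qed.

Lemma Weps_ev_silent : ev_always (fun i => w i = None) -> Weps both_inf w.
Proof.
move=> [N wN]; right; exists N; split; last first.
  by exists odd; apply/both_inf_prefix_independent; exact: both_inf_odd.
elim=> [|k IH]; first by rewrite leqn0 => /eqP ->.
rewrite leq_eqVlt => /orP [/eqP <- // | Nk].
by rewrite /= wN // cats0 IH.
Qed.

(* The projection is either infinite, hence not in [both_inf], or finite,
   which leaves no room for infinitely many colours. *)
Lemma Weps_one_colour x : Weps both_inf w -> ev_always (fun i => w i <> Some x) ->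
  ~ inf_often (fun i => w i = Some (~~ x)).
Proof.
move=> [[s [Hs Ws]] | [k [Hk _]]] [N HN] w_inf; last first.
  have [i ki wi] := w_inf k.
  have := size_proj_finS i; rewrite (Hk _ (leq_trans ki (leqnSn _))) (Hk _ ki) wi.
  by rewrite addn1 => /n_Sn.
pose L := size (pf N).
have [n Ln sn] := Ws x L; have [k Hk] := Hs n.+1.
have size_k : size (pf k) = n.+1 by rewrite Hk size_mkseq.
have Nk : N <= k.
  rewrite leqNgt; apply/negP => /ltnW /size_proj_fin_mono; rewrite size_k -/L; lia.
have [t Ht Hm] := proj_fin_add N (k - N); rewrite subnKC // in Ht.
have : nth false (pf k) n = x by rewrite Hk nth_mkseq.
rewrite Ht nth_cat ltnNge -/L Ln /= => tx.
have /Hm [i Ni wi] : x \in t.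
  rewrite -tx mem_nth // -(ltn_add2l L) subnKC //.
  by rewrite /L -size_cat -Ht size_k.
exact: HN i Ni wi.
Qed.

End ProjFin.

Lemma dependent_choice {A : Type} (P : A -> Prop) (R : A -> A -> Prop) :
  (forall a, P a -> exists a', P a' /\ R a a') -> forall a0, P a0 ->
  exists2 f : nat -> A, f 0 = a0 & forall n, P (f n) /\ R (f n) (f n.+1).
Proof.
move=> PR a0 Pa0.
pose next (x : {a | P a}) : {a | P a} :=
  let e := constructive_indefinite_description _ (PR _ (proj2_sig x)) in
  exist _ (proj1_sig e) (proj1 (proj2_sig e)).
have R_next x : R (proj1_sig x) (proj1_sig (next x)).
  by rewrite /next /=; case: constructive_indefinite_description => a' [].
exists (fun n => proj1_sig (iter n next (exist _ a0 Pa0))) => // n.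
by split; [exact: proj2_sig | rewrite iterS; exact: R_next].
Qed.

Section Game.
Variables (G : Graph (option bool)) (VEve : vtx G -> Prop) (v0 : vtx G).
Variables (S : Graph (option bool)) (pi : vtx S -> vtx G) (s0 : vtx S).
Hypothesis pi_strategy : is_strategy G VEve v0 S pi s0.
Hypothesis s0_winning : is_winning both_inf S s0.

Inductive walk : nat -> vtx S -> vtx S -> Prop :=
| walk0 s : walk 0 s s
| walkS n s c s1 t : edge S s c s1 -> walk n s1 t -> walk n.+1 s t.

Lemma walk_rcons n s t c t' : walk n s t -> edge S t c t' -> walk n.+1 s t'.
Proof.
elim=> [s1 | m s1 c1 s2 t1 e _ IH] e'; first exact: walkS e' (walk0 _).
exact: walkS e (IH e').
Qed.

Lemma walk_prepend n s t (v : nat -> vtx S) c : walk n s t -> is_path S v c -> v 0 = t ->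
  exists v' c', [/\ is_path S v' c', v' 0 = s & forall i, c' (n + i) = c i].
Proof.
move=> st; elim: st v c => [s1 | m s1 c1 s2 t1 e _ IH] v c v_path v0t.
  by exists v, c; split.
have [v' [c' [v'_path v'0 c'E]]] := IH v c v_path v0t.
exists (fun i => if i is i'.+1 then v' i' else s1).
exists (fun i => if i is i'.+1 then c' i' else c1).
by split=> // -[|i] //=; rewrite v'0.
Qed.

Definition reached s := exists n, walk n s0 s.

Lemma reached_edge s c s' : reached s -> edge S s c s' -> reached s'.
Proof. by move=> [n sn] e; exists n.+1; exact: walk_rcons sn e. Qed.

Definition visited v := exists2 s, reached s & pi s = v.

Definition good_move (b : bool) (X Y : vtx G -> Prop) (c : option bool) v' :=
  match c with None => X v' | Some y => if y == b then visited v' else Y v' end.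

Definition cpre b X Y v :=
  (VEve v -> exists c v', edge G v c v' /\ good_move b X Y c v') /\
  (~ VEve v -> forall c v', edge G v c v' -> good_move b X Y c v').

Definition stay b Y v := exists2 X, incl X (cpre b X Y) & X v.

(* [stay b Y] is the greatest fixpoint of [X |-> cpre b X Y] and [attr b] the
   least fixpoint of [stay b]: from [attr b] Eve can force colour [b], landing
   on a visited vertex, after finitely many colours [~~ b] (and any number of
   epsilon-edges). *)
Notation attr b := (lfp (stay b)).
Notation attr_rank b := (rank (stay b)).

Lemma good_move_mono b X X' Y Y' c v' :
  incl X X' -> incl Y Y' -> good_move b X Y c v' -> good_move b X' Y' c v'.
Proof.
by move=> XX' YY'; case: c => [y|] /=; [case: (y == b) => //; exact: YY' | exact: XX'].
Qed.

Lemma cpre_mono b X X' Y Y' : incl X X' -> incl Y Y' -> incl (cpre b X Y) (cpre b X' Y').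
Proof.
move=> XX' YY' v [eve adam]; split=> [/eve [c [v' [e gm]]] | nE c v' e].
  by exists c, v'; split=> //; exact: good_move_mono gm.
exact: good_move_mono (adam nE c v' e).
Qed.

Lemma stay_mono b X Y : incl X Y -> incl (stay b X) (stay b Y).
Proof. by move=> XY v [Z HZ Zv]; exists Z => // u /HZ; apply: cpre_mono. Qed.

Lemma stay_cpre b Y : incl (stay b Y) (cpre b (stay b Y) Y).
Proof. by move=> v [Z HZ Zv]; apply: cpre_mono (HZ v Zv) => // u Zu; exists Z. Qed.

Lemma attr_cpre b : incl (attr b) (cpre b (attr b) (attr b)).
Proof.
move=> v /(lfp_incl_Phi (@stay_mono b)) /stay_cpre.
by apply: cpre_mono => //; exact: Phi_lfp_incl.
Qed.

Lemma strategy_cpre b X Y s :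
  (forall c s', edge S s c s' -> good_move b X Y c (pi s')) -> cpre b X Y (pi s).
Proof.
case: pi_strategy => pi_mor [_ adam] good; split=> [_ | nE c v' e].
  have [c [s' e]] := @edge_total _ S s.
  by exists c, (pi s'); split; [exact: pi_mor | exact: good].
by have [s' [<- e']] := adam _ _ _ nE e s erefl; exact: good.
Qed.

Inductive eps_reach (s : vtx S) : vtx S -> Prop :=
| eps_refl : eps_reach s s
| eps_rcons s1 s2 : eps_reach s s1 -> edge S s1 None s2 -> eps_reach s s2.

Inductive eps_hop (y : bool) : nat -> vtx S -> vtx S -> Prop :=
| hop0 s t : edge S s (Some y) t -> eps_hop y 0 s t
| hopS n s s1 t : edge S s None s1 -> eps_hop y n s1 t -> eps_hop y n.+1 s t.

Lemma eps_reach_hop y s s1 n t :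
  eps_reach s s1 -> eps_hop y n s1 t -> exists m, eps_hop y m s t.
Proof.
move=> ss1; elim: ss1 n => [|t1 t2 _ IH e] n ht; first by exists n.
exact: IH (hopS e ht).
Qed.

Lemma eps_reach_reached s s1 : eps_reach s s1 -> reached s -> reached s1.
Proof. by move=> ss1 Rs; elim: ss1 => // t1 t2 _ Rt1 e; exact: reached_edge Rt1 e. Qed.

Definition bad b s := reached s /\ ~ attr b (pi s).

(* If there is no such hop, the vertices reachable from [s] by epsilon-edges,
   together with [attr b], form a set [X] with [X <= cpre b X (attr b)],
   which puts [pi s] into [attr b]. *)
Lemma bad_hop b s : bad b s -> exists n t, eps_hop (~~ b) n s t /\ bad b t.
Proof.
move=> [Rs nattr]; apply: NNPP => nhop; apply: nattr.
have hop_attr n t : eps_hop (~~ b) n s t -> reached t -> attr b (pi t).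
  by move=> st Rt; apply: NNPP => nt; apply: nhop; exists n, t.
pose X w := attr b w \/ exists2 s1, eps_reach s s1 & pi s1 = w.
apply: Phi_lfp_incl; exists X; last by right; exists s => //; exact: eps_refl.
move=> w [/attr_cpre | [s1 ss1 <-]].
  by apply: cpre_mono => // u; left.
have Rs1 := eps_reach_reached ss1 Rs.
apply: strategy_cpre => -[y|] s2 e /=; last by right; exists s2 => //; exact: eps_rcons e.
case: eqP => [_ | /eqP yb]; first by exists s2 => //; exact: reached_edge e.
have yE : y = ~~ b by move: yb; case: (y); case: (b).
rewrite yE in e; have [m hm] := eps_reach_hop ss1 (hop0 e).
exact: hop_attr hm (reached_edge Rs1 e).
Qed.

(* A state [(s, n)] has [n] epsilon-edges and then one colour [~~ b] to go
   before reaching a bad vertex; following the hops forever gives a play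
   that avoids [b]. *)
Definition hop_colour b (n : nat) := if n is 0 then Some (~~ b) else None.

Definition hop_pending b (a : vtx S * nat) := exists t, eps_hop (~~ b) a.2 a.1 t /\ bad b t.

Lemma hop_pending_step b a : hop_pending b a ->
  exists a', hop_pending b a' /\
    (edge S a.1 (hop_colour b a.2) a'.1 /\ (a.2 = 0 \/ a.2 = a'.2.+1)).
Proof.
case: a => s n [t [[s' t' e | m s' s1 t' e hop] bad_t]] /=.
  have [m [t'' [hop bad_t'']]] := bad_hop bad_t.
  by exists (t', m); split; [exists t'' | split => //; left].
by exists (s1, m); split; [exists t' | split => //; right].
Qed.

Lemma bad_path b s : bad b s -> exists v c, [/\ is_path S v c, v 0 = s,
  forall i, c i <> Some b & inf_often (fun i => c i = Some (~~ b))].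
Proof.
move=> /bad_hop [n [t [hop bad_t]]].
have pending : hop_pending b (s, n) by exists t.
have [f f0 f_step] := dependent_choice (@hop_pending_step b) pending.
exists (fun i => (f i).1), (fun i => hop_colour b (f i).2); split.
- by move=> i; case: (f_step i) => _ [].
- by rewrite f0.
- by move=> i; case: (f i).2 => [|_] //= []; case: (b).
have hits k M : (f M).2 = k -> exists2 i, M <= i & (f i).2 = 0.
  elim: k M => [|k IH] M fM; first by exists M.
  have [_ [_ [|fM']]] := f_step M; first by rewrite fM.
  have [|i Mi fi] := IH M.+1; first by move: fM'; rewrite fM => -[].
  by exists i; first exact: ltnW.
by move=> M; have [i Mi fi] := hits _ M erefl; exists i; rewrite // /hop_colour fi.
Qed.

Lemma visited_attr b v : visited v -> attr b v.
Proof.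
move=> [s [n s0s] <-]; apply: NNPP => nattr.
have [u [c [c_path u0s no_b nb_inf]]] := bad_path (conj (ex_intro _ n s0s) nattr).
have [u' [c' [c'_path u'0 c'E]]] := walk_prepend s0s c_path u0s.
apply: (Weps_one_colour (s0_winning c'_path u'0) (x := b)).
  by exists n => i ni; rewrite -(subnKC ni) c'E; exact: no_b.
by move=> N; have [i Ni ci] := nb_inf N; exists (n + i); rewrite ?c'E //; lia.
Qed.

Definition mem_vtx := {p : vtx G * bool | attr p.2 p.1}.

Definition mem_move (b : bool) v (c : option bool) v' (b' : bool) : Prop :=
  match c with
  | None => b' = b /\ stay b (attr_rank b v) v'
  | Some y => if y == b then b' = ~~ b /\ visited v' else b' = b /\ attr_rank b v v'
  end.

Definition mem_edge (p : mem_vtx) c (p' : mem_vtx) : Prop :=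
  edge G (sval p).1 c (sval p').1 /\
  mem_move (sval p).2 (sval p).1 c (sval p').1 (sval p').2.

Lemma mem_move_of_good b v c v' :
  good_move b (stay b (attr_rank b v)) (attr_rank b v) c v' ->
  exists p' : mem_vtx, (sval p').1 = v' /\ mem_move b v c v' (sval p').2.
Proof.
case: c => [y|] /=; last by move=> H; exists (exist _ (v', b) (Phi_rank_incl_lfp H)).
case: eqP => _ H; first by exists (exist _ (v', ~~ b) (visited_attr (~~ b) H)).
by exists (exist _ (v', b) (rank_incl_lfp H)).
Qed.

Lemma mem_vtx_cpre (p : mem_vtx) : let: (v, b) := sval p in
  cpre b (stay b (attr_rank b v)) (attr_rank b v) v.
Proof.
case: p => -[v b] attr_v /=.
exact/stay_cpre/(lfp_Phi_rank (@stay_mono b)).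
Qed.

Lemma mem_edge_total p : exists c p', mem_edge p c p'.
Proof.
have := mem_vtx_cpre p; case E: (sval p) => [v b] [eve adam].
have [Ev | nEv] := classic (VEve v).
  have [c [v' [e /mem_move_of_good [p' [p'v' mv]]]]] := eve Ev.
  by exists c, p'; rewrite /mem_edge E p'v'.
have [c [v' e]] := @edge_total _ G v.
have [p' [p'v' mv]] := mem_move_of_good (adam nEv c v' e).
by exists c, p'; rewrite /mem_edge E p'v'.
Qed.

Definition mem_graph : Graph (option bool) := @mkGraph _ mem_vtx mem_edge mem_edge_total.

Lemma visited_v0 : visited v0.
Proof. by exists s0; [exists 0; exact: walk0 | case: pi_strategy => _ []]. Qed.

Definition mem_s0 : mem_vtx := exist _ (v0, true) (visited_attr true visited_v0).

Lemma mem_strategy :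
  is_strategy G VEve v0 mem_graph (fun p : vtx mem_graph => (sval p).1) mem_s0.
Proof.
split; first by move=> p c p' [].
split=> // v c v' nEv e p pv.
have := mem_vtx_cpre p; case E: (sval p) => [u b] [_ adam].
move: pv; rewrite E /= => uv; subst u.
have [p' [p'v' mv]] := mem_move_of_good (adam nEv c v' e).
by exists p'; split=> //; rewrite /= /mem_edge E p'v'.
Qed.

Lemma mem_edge_eps p p' : mem_edge p None p' -> (sval p).2 = (sval p').2.
Proof. by move=> [_ [-> _]]. Qed.

Lemma mem_vtx_inj : injective (fun p : mem_vtx => sval p).
Proof. move=> [a Ha] [b Hb] /= ab; subst b; congr exist; exact: proof_irrelevance. Qed.

(* Once colour [x] has stopped, the first colour [~~ x] sets the memory to
   [x] for good, after which the ranks can only decrease. *)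
Lemma mem_play_starved p c x : is_path mem_graph p c ->
  ev_always (fun i => c i <> Some x) -> ~ inf_often (fun i => c i = Some (~~ x)).
Proof.
move=> p_path [N no_x] nx_inf.
pose v n := (sval (p n)).1; pose b n := (sval (p n)).2.
have step n : mem_move (b n) (v n) (c n) (v n.+1) (b n.+1) by case: (p_path n).
have [i Ni ci] := nx_inf N.
have b_from j : b (i.+1 + j) = x.
  elim: j => [|j IH].
    move: (step i); rewrite addn0 ci /=; case: eqP => [<- [-> _] | nb [-> _]].
      exact: negbK.
    by move: nb; case: (b i); case: (x).
  have Nij : N <= i.+1 + j by lia.
  rewrite addnS; move: (step (i.+1 + j)) (no_x _ Nij); rewrite IH.
  case: (c _) => [y|] /=; last by case.
  by case: eqP => [-> _ /(_ erefl) | _ []].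
apply: (no_rank_descent (@stay_mono x) (f := fun j => v (i.+1 + j))).
- by have := svalP (p (i.+1 + 0)); rewrite -/(b _) b_from.
- move=> j; have Nij : N <= i.+1 + j by lia.
  rewrite addnS; move: (step (i.+1 + j)) (no_x _ Nij); rewrite b_from.
  case: (c _) => [y|] /=; last by move=> [_ /(rank_Phi_le (@stay_mono x))].
  by case: eqP => [-> _ /(_ erefl) | _ [_ /(rank_le (@stay_mono x))]].
move=> M; have [k Mk ck] := nx_inf (i.+1 + M).
exists (k - i.+1); first lia.
have kE : i.+1 + (k - i.+1) = k by lia.
rewrite addnS kE; move: (step k); rewrite ck -kE b_from /=.
by case: eqP => [/eqP | _ []]; [case: (x) | rewrite kE].
Qed.

Lemma mem_winning : is_winning both_inf mem_graph mem_s0.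
Proof.
move=> p c p_path _.
have [c_inf | /not_all_ex_not [x /not_inf_often no_x]] :=
  classic (forall x, inf_often (fun i => c i = Some x)).
  exact: Weps_inf_often.
have [nx_inf | /not_inf_often [N' no_nx]] := classic (inf_often (fun i => c i = Some (~~ x))).
  by case: (mem_play_starved p_path no_x nx_inf).
case: no_x => N no_x; apply: Weps_ev_silent; exists (maxn N N') => i.
rewrite geq_max => /andP [Ni N'i]; move: (no_x i Ni) (no_nx i N'i).
by case: (c i) => // y; case: (x); case: y.
Qed.

End Game.

Lemma both_inf_eps_memory_le2 : eps_memory_le2 both_inf.
Proof.
move=> G VEve v0 [S [pi [s0 [pi_strategy s0_winning]]]].
exists bool, (mem_graph pi_strategy s0_winning), (fun p => sval p).
exists (mem_s0 pi_strategy s0_winning); split; first by rewrite card_bool.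
split; first exact: mem_vtx_inj.
split; first exact: mem_edge_eps.
split; [exact: mem_strategy | exact: mem_winning].
Qed.

Lemma monotone_loop C (H : Graph C) (le : vtx H -> vtx H -> Prop) u v c :
  (forall x, le x x) -> monotone H le -> le u v -> edge H u c v -> edge H v c v.
Proof. by move=> le_refl le_mono uv e; exact: le_mono uv e (le_refl v). Qed.

Lemma both_inf_no_loop (H : Graph bool) v c : satisfies both_inf H -> ~ edge H v c v.
Proof.
move=> H_both e; have [n _] := H_both (fun=> v) (fun=> c) (fun=> e) (~~ c) 0.
by case: (c).
Qed.

Lemma increasing_unbounded (g : nat -> nat) :
  (forall k, g k < g k.+1) -> forall k, k <= g k.
Proof. by move=> g_incr; elim=> // k IH; exact: leq_ltn_trans IH (g_incr k). Qed.

Section Clique.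
Variable m : nat.
Hypothesis m_gt0 : 0 < m.

Definition clique_edge (u : 'I_m.+1) (c : bool) (v : 'I_m.+1) : Prop :=
  u != v /\ c = (u < v).

Lemma clique_edge_total u : exists c v, clique_edge u c v.
Proof.
have [u0 | nu0] := eqVneq u ord0; last by exists (u < (ord0 : 'I_m.+1)), ord0.
by exists true, (Ordinal (m_gt0 : 1 < m.+1)); rewrite /clique_edge u0.
Qed.

Definition clique : Graph bool := @mkGraph _ 'I_m.+1 clique_edge clique_edge_total.

Lemma clique_both_inf : satisfies both_inf clique.
Proof.
move=> v c v_path x; apply: NNPP => /not_inf_often [N cN].
have run k : if x then v (N + k.+1) < v (N + k) else v (N + k) < v (N + k.+1).
  have [uv cE] := v_path (N + k); rewrite addnS.
  have := cN (N + k) (leq_addr _ _); rewrite cE; move: uv.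
  by rewrite neq_ltn; case: ltngtP; case: (x).
clear cN; case: x run => run.
  have g_incr k : m - v (N + k) < m - v (N + k.+1).
    by have := run k; have := ltn_ord (v (N + k)); lia.
  have := increasing_unbounded (g := fun k => m - v (N + k)) g_incr m.+1.
  by rewrite leqNgt ltnS leq_subr.
have := increasing_unbounded (g := fun k => val (v (N + k))) run m.+1.
by rewrite leqNgt ltn_ord.
Qed.

Lemma clique_image_antichain (H : Graph bool) (le : vtx H -> vtx H -> Prop) f :
  (forall x, le x x) -> monotone H le -> satisfies both_inf H ->
  is_morphism clique H f -> has_antichain le m.
Proof.
move=> le_refl le_mono H_both f_mor.
exists (fun i => f (widen_ord (leqnSn m) i)) => i j ij ij_le.
apply: (both_inf_no_loop H_both (c := i < j)).
by apply: monotone_loop le_refl le_mono ij_le (f_mor _ _ _ _); split.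
Qed.

End Clique.

Theorem proposition5p5 :
  exists (C : Type) (W : (nat -> C) -> Prop),
    prefix_independent W /\ eps_memory_le2 W /\
    forall m : nat, 1 <= m ->
      exists Gm : Graph C, satisfies W Gm /\
        forall (H : Graph C) (le : vtx H -> vtx H -> Prop),
          partial_order le -> monotone H le -> satisfies W H ->
          (exists f : vtx Gm -> vtx H, is_morphism Gm H f) ->
          has_antichain le m.
Proof.
exists bool, both_inf; split; first exact: both_inf_prefix_independent.
split; first exact: both_inf_eps_memory_le2.
move=> m m_gt0; exists (clique m_gt0); split; first exact: clique_both_inf.
move=> H le [le_refl _] le_mono H_both [f f_mor].
exact: clique_image_antichain le_refl le_mono H_both f_mor.
Qed.
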